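(* Let $(C,\mathbf A)$, $C\in\mathcal L(\mathcal X,\mathcal Y)$, $\mathbf A\in\mathcal L(\mathcal X)^d$, be an output-stable pair. Then (1) $(C,\mathbf A)$ is also $\mathbf a$-output-stable and $\mathcal G^{\mathbf a}_{C,\mathbf A}\le\mathcal G_{C,\mathbf A}$; (2) equality $\mathcal G^{\mathbf a}_{C,\mathbf A}=\mathcal G_{C,\mathbf A}$ holds if and only if $\mathbf A$ is $C$-abelian, i.e. $C\mathbf A^v=C\mathbf A^u$ whenever $u,v\in\mathcal F_d$ with $\mathbf a(u)=\mathbf a(v)$.
   Context: $\mathcal F_d$: free semigroup of words on $\{1,\dots,d\}$; $\mathbf A^v=A_{i_N}\cdots A_{i_1}$ for $v=i_N\cdots i_1$. Output-stable: $x\mapsto\{C\mathbf A^vx\}_v$ bounded into $\ell^2_{\mathcal Y}(\mathcal F_d)$; $\mathcal G_{C,\mathbf A}=\sum_v(\mathbf A^v)^*C^*C\mathbf A^v$. Abelianization $\mathbf a\colon\mathcal F_d\to\mathbb Z^d_+$: $\mathbf a(i_N\cdots i_1)=(n_1,\dots,n_d)$, $n_k=\#\{\ell:i_\ell=k\}$; $|\mathbf n|=\sum n_k$, $\mathbf n!=\prod n_k!$, $\boldsymbol\lambda^{\mathbf n}=\prod\lambda_k^{n_k}$. Arveson space $\mathcal H_{\mathcal Y}(k_d)$: power series $\sum_{\mathbf n}f_{\mathbf n}\boldsymbol\lambda^{\mathbf n}$ with $\|f\|^2=\sum_{\mathbf n}\frac{\mathbf n!}{|\mathbf n|!}\|f_{\mathbf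 n}\|^2_{\mathcal Y}<\infty$. $(C,\mathbf A)$ is $\mathbf a$-output-stable if $\widehat{\mathcal O}^{\mathbf a}_{C,\mathbf A}\colon x\mapsto\sum_{\mathbf n}\big(\sum_{v\in\mathbf a^{-1}(\mathbf n)}C\mathbf A^vx\big)\boldsymbol\lambda^{\mathbf n}$ is bounded $\mathcal X\to\mathcal H_{\mathcal Y}(k_d)$, and $\mathcal G^{\mathbf a}_{C,\mathbf A}=(\widehat{\mathcal O}^{\mathbf a}_{C,\mathbf A})^*\widehat{\mathcal O}^{\mathbf a}_{C,\mathbf A}$. *)

From mathcomp Require Import all_boot all_order all_algebra.
From mathcomp Require Import complex.
From mathcomp Require Import all_classical all_reals all_analysis.

Set Implicit Arguments.
Unset Strict Implicit.
Unset Printing Implicit Defensive.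

Import Order.TTheory GRing.Theory Num.Theory.
Import numFieldNormedType.Exports.
Local Open Scope ring_scope.
Local Open Scope classical_set_scope.

Section Hilbert.
Variable R : realType.

Definition hnorm (X : lmodType R[i]) (ip : X -> X -> R[i]) (x : X) : R :=
  Num.sqrt (complex.Re (ip x x)).

Record is_hilbert (X : lmodType R[i]) (ip : X -> X -> R[i]) : Prop := {
  ip_linear : forall (a : R[i]) (x y z : X), ip (a *: x + y) z = a * ip x z + ip y z;
  ip_conj : forall x y : X, ip y x = conjc (ip x y);
  ip_ge0 : forall x : X, 0 <= ip x x;
  ip_def : forall x : X, ip x x = 0 -> x = 0;
  ip_complete : forall u : nat -> X,
    (forall e : R, 0 < e -> exists N, forall m n, (N <= m)%N -> (N <= n)%N ->
        hnorm ip (u m - u n) < e) ->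
    exists l : X, forall e : R, 0 < e -> exists N, forall n, (N <= n)%N ->
        hnorm ip (u n - l) < e
}.

Definition bounded_op (X Y : lmodType R[i]) (ipX : X -> X -> R[i])
  (ipY : Y -> Y -> R[i]) (T : X -> Y) : Prop :=
  (forall (a : R[i]) (x y : X), T (a *: x + y) = a *: T x + T y) /\
  exists M : R, forall x, hnorm ipY (T x) <= M * hnorm ipX x.

Variables (X Y : lmodType R[i]) (ipX : X -> X -> R[i]) (ipY : Y -> Y -> R[i]).
Variable d : nat.

(* A word v = i_N ... i_1 of F_d is represented by the sequence
   [:: i_1; ...; i_N] (letters listed in order of application), and
   A^v x = A_{i_N} (... (A_{i_1} x)). Words of length k are k.-tuple 'I_d. *)
Definition wact (A : 'I_d -> X -> X) (w : seq 'I_d) (x : X) : X :=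
  foldl (fun y i => A i y) x w.

Definition abel (w : seq 'I_d) : {ffun 'I_d -> nat} := [ffun j => count_mem j w].

(* multi-indices n in Z_+^d with |n| = k are {ffun 'I_d -> 'I_k.+1} with
   sum k; this is the k-th homogeneous part of the Arveson space. *)
Definition mdeg (k : nat) (n : {ffun 'I_d -> 'I_k.+1}) : nat := \sum_j (n j : nat).

Definition arv_weight (k : nat) (n : {ffun 'I_d -> 'I_k.+1}) : R :=
  (\prod_j (n j)`!)%:R / (k`!)%:R.

(* coefficient of lambda^n in O^a_{C,A} x : sum over v in a^{-1}(n) of C A^v x *)
Definition acoef (C : X -> Y) (A : 'I_d -> X -> X) (k : nat)
  (n : {ffun 'I_d -> 'I_k.+1}) (x : X) : Y :=
  \sum_(w : k.-tuple 'I_d | [forall j, abel w j == n j]) C (wact A w x).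

(* partial sums (over words of length <= N) of || {C A^v x}_v ||^2_{l^2} *)
Definition out_part (C : X -> Y) (A : 'I_d -> X -> X) (N : nat) (x : X) : R :=
  \sum_(k < N.+1) \sum_(w : k.-tuple 'I_d) hnorm ipY (C (wact A w x)) ^+ 2.

(* partial sums (over |n| <= N) of || O^a x ||^2 in the Arveson space *)
Definition aout_part (C : X -> Y) (A : 'I_d -> X -> X) (N : nat) (x : X) : R :=
  \sum_(k < N.+1) \sum_(n : {ffun 'I_d -> 'I_k.+1} | mdeg n == k)
     arv_weight n * hnorm ipY (acoef C A n x) ^+ 2.

(* output-stable: x |-> {C A^v x}_v is bounded X -> l^2_Y(F_d) *)
Definition output_stable (C : X -> Y) (A : 'I_d -> X -> X) : Prop :=
  exists M : R, forall x N, out_part C A N x <= M * hnorm ipX x ^+ 2.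

(* a-output-stable: O^a_{C,A} is bounded X -> H_Y(k_d) *)
Definition a_output_stable (C : X -> Y) (A : 'I_d -> X -> X) : Prop :=
  exists M : R, forall x N, aout_part C A N x <= M * hnorm ipX x ^+ 2.

Definition gram_part (C : X -> Y) (A : 'I_d -> X -> X) (x y : X) (N : nat) : R[i] :=
  \sum_(k < N.+1) \sum_(w : k.-tuple 'I_d) ipY (C (wact A w x)) (C (wact A w y)).

Definition agram_part (C : X -> Y) (A : 'I_d -> X -> X) (x y : X) (N : nat) : R[i] :=
  \sum_(k < N.+1) \sum_(n : {ffun 'I_d -> 'I_k.+1} | mdeg n == k)
     Complex (arv_weight n) 0 * ipY (acoef C A n x) (acoef C A n y).

Definition clim (u : nat -> R[i]) : R[i] :=
  Complex (lim ((fun N => complex.Re (u N)) @ \oo))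
          (lim ((fun N => complex.Im (u N)) @ \oo)).

(* The Gramians G = O^* O, G^a = (O^a)^* O^a, given through their
   sesquilinear forms: <G x, y>_X = <O x, O y>_{l^2},
   <G^a x, y>_X = <O^a x, O^a y>_{H(k_d)}. *)
Definition gram (C : X -> Y) (A : 'I_d -> X -> X) (x y : X) : R[i] :=
  clim (gram_part C A x y).

Definition agram (C : X -> Y) (A : 'I_d -> X -> X) (x y : X) : R[i] :=
  clim (agram_part C A x y).

Definition C_abelian (C : X -> Y) (A : 'I_d -> X -> X) : Prop :=
  forall u v : seq 'I_d, abel u = abel v -> forall x, C (wact A u x) = C (wact A v x).

End Hilbert.

(* For a multi-index n with |n| = k the fibre a^{-1}(n) consists of k!/n! words,
   so the Arveson weight n!/k! is 1/#a^{-1}(n) and the n-th term of |O^a x|^2 is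
   the squared norm of the sum of the vectors C A^v x, v in a^{-1}(n), divided by
   the size of the fibre.  By Lagrange's identity this is at most the sum of their
   squared norms, which is the part of |O x|^2 carried by the fibre, with equality
   iff these vectors coincide.  Summing over fibres and degrees gives G^a <= G;
   equality of the two monotone series forces equality in every degree, i.e.
   C-abelianness, and conversely for a C-abelian tuple both sesquilinear forms
   agree fibre by fibre. *)

From mathcomp Require Import all_boot all_order all_algebra.
From mathcomp Require Import complex.
From mathcomp Require Import all_classical all_reals all_analysis.
From mathcomp Require Import ring.
Import Order.TTheory GRing.Theory Num.Theory.
Import numFieldNormedType.Exports.
Set Implicit Arguments.
Unset Strict Implicit.
Unset Printing Implicit Defensive.

Section WordCounting.
Variable T : finType.

Lemma big_tuple0 (V : Type) (idx : V) (op : Monoid.com_law idx) (F : seq T -> V) :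
  \big[op/idx]_(w : 0.-tuple T) F w = F [::].
Proof.
rewrite (eq_bigr (fun _ => F [::])) => [|w _]; last by rewrite tuple0.
by rewrite big_const card_tuple /= Monoid.mulm1.
Qed.

Lemma big_tupleS (V : Type) (idx : V) (op : Monoid.com_law idx) k (F : seq T -> V) :
  \big[op/idx]_(w : k.+1.-tuple T) F w =
  \big[op/idx]_(i : T) \big[op/idx]_(w : k.-tuple T) F (i :: w).
Proof.
rewrite pair_big (reindex (fun p : T * k.-tuple T => [tuple of p.1 :: p.2])) //=.
exists (fun w : k.+1.-tuple T => (thead w, [tuple of behead w])).
  by move=> [i w] _; congr pair; apply: val_inj.
by move=> w _; apply: val_inj; case: w => [[]].
Qed.

Lemma sum_count_mem (s : seq T) : \sum_j count_mem j s = size s.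
Proof.
elim: s => [|a s IH] /=; first by rewrite big1.
rewrite big_split /= IH (bigD1 a) //= eqxx big1 // => j /negbTE.
by rewrite eq_sym => ->.
Qed.

Definition has_counts (f : T -> nat) (s : seq T) : bool :=
  [forall j, count_mem j s == f j].

Lemma has_counts_cons (f : T -> nat) i s : 0 < f i ->
  has_counts f (i :: s) = has_counts (fun j => f j - (i == j)) s.
Proof.
move=> fi_gt0; apply: eq_forallb => j /=; have [<-|ne] := eqVneq i j.
  by rewrite -(prednK fi_gt0) subn1 add1n eqSS.
by rewrite subn0.
Qed.

Lemma has_counts_cons0 (f : T -> nat) i s : f i = 0 -> has_counts f (i :: s) = false.
Proof. by move=> fi0; apply/negbTE/forallP => /(_ i); rewrite /= eqxx fi0. Qed.

Lemma sum_has_counts k (f : T -> nat) : \sum_j f j = k ->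
  (\sum_(w : k.-tuple T) has_counts f w) * \prod_j (f j)`! = k`!.
Proof.
elim: k f => [|k IH] f sum_f.
  have f0 j : f j = 0 by apply/eqP; rewrite -leqn0 -sum_f (bigD1 j) ?leq_addr.
  rewrite (big_tuple0 _ (fun w => nat_of_bool (has_counts f w))).
  have -> : has_counts f [::] by apply/forallP => j; rewrite f0.
  by rewrite big1 // => j _; rewrite f0.
have head_term i : (\sum_(w : k.-tuple T) has_counts f (i :: w)) * \prod_j (f j)`! = f i * k`!.
  have [fi0|fi_gt0] := posnP (f i).
    by rewrite big1 ?fi0 // => w _; rewrite has_counts_cons0.
  pose g j := f j - (i == j).
  have g_off j : j != i -> g j = f j by rewrite /g eq_sym => /negbTE ->; rewrite subn0.
  have g_i : g i = (f i).-1 by rewrite /g eqxx subn1.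
  have fact_f : \prod_j (f j)`! = f i * \prod_j (g j)`!.
    have fact_fi : (f i)`! = f i * (f i).-1`!.
      by rewrite -[in LHS](prednK fi_gt0) factS prednK.
    rewrite (bigD1 i) //= [in RHS](bigD1 i) //= g_i mulnA -fact_fi.
    by congr (_ * _); apply: eq_bigr => j /g_off ->.
  have sum_g : \sum_j g j = k.
    rewrite (bigD1 i) //= (eq_bigr _ (fun j => g_off j)) g_i.
    by move: sum_f; rewrite (bigD1 i) //= -(prednK fi_gt0) addSn => -[].
  rewrite (eq_bigr (fun w : k.-tuple T => nat_of_bool (has_counts g w))) => [|w _].
    by rewrite fact_f mulnCA IH.
  by rewrite has_counts_cons.
rewrite (big_tupleS _ _ (fun w => nat_of_bool (has_counts f w))) /=.
by rewrite big_distrl /= (eq_bigr _ (fun i _ => head_term i)) -big_distrl /= sum_f.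
Qed.

End WordCounting.

Local Open Scope ring_scope.
Local Open Scope complex_scope.

Section InnerProduct.
Variables (R : realType) (Y : lmodType R[i]) (ip : Y -> Y -> R[i]).
Hypothesis hY : is_hilbert ip.

Lemma ipDl a b z : ip (a + b) z = ip a z + ip b z.
Proof. by rewrite -{1}(scale1r a) (ip_linear hY) mul1r. Qed.

Lemma ip0l z : ip 0 z = 0.
Proof. by apply: (addrI (ip 0 z)); rewrite -ipDl !addr0. Qed.

Lemma ipNl a z : ip (- a) z = - ip a z.
Proof. by rewrite -scaleN1r -[_ *: a]addr0 (ip_linear hY) ip0l addr0 mulN1r. Qed.

Lemma ipDr z a b : ip z (a + b) = ip z a + ip z b.
Proof. by rewrite (ip_conj hY) ipDl rmorphD /= -!(ip_conj hY). Qed.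

Lemma ipNr z a : ip z (- a) = - ip z a.
Proof. by rewrite (ip_conj hY) ipNl rmorphN /= -(ip_conj hY). Qed.

Lemma ip0r z : ip z 0 = 0.
Proof. by rewrite (ip_conj hY) ip0l rmorph0. Qed.

Lemma ip_suml (I : finType) (P : pred I) (F : I -> Y) z :
  ip (\sum_(i | P i) F i) z = \sum_(i | P i) ip (F i) z.
Proof. by elim/big_rec2: _ => [|i y1 y2 _ <-]; rewrite ?ip0l ?ipDl. Qed.

Lemma ip_sumr (I : finType) (P : pred I) (F : I -> Y) z :
  ip z (\sum_(i | P i) F i) = \sum_(i | P i) ip z (F i).
Proof. by elim/big_rec2: _ => [|i y1 y2 _ <-]; rewrite ?ip0r ?ipDr. Qed.

Lemma ip_self a : ip a a = (hnorm ip a ^+ 2)%:C.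
Proof.
have := ip_ge0 hY a; rewrite lecE => /andP[/eqP Im0 Re_ge0].
by rewrite /hnorm sqr_sqrtr //; case: (ip a a) Im0 => ? ? /= ->.
Qed.

Lemma hnorm_sqr_eq0 a : hnorm ip a ^+ 2 = 0 -> a = 0.
Proof. by move=> a0; apply: (ip_def hY); rewrite ip_self a0. Qed.

Lemma lagrange_identity (I : finType) (P : pred I) (V : I -> Y) :
  \sum_(i | P i) \sum_(j | P j) hnorm ip (V i - V j) ^+ 2 =
  (\sum_(i | P i) hnorm ip (V i) ^+ 2) *+ (2 * #|P|) -
  hnorm ip (\sum_(i | P i) V i) ^+ 2 *+ 2.
Proof.
apply: complexI; rewrite rmorphB !rmorphMn !rmorph_sum /= -ip_self.
under eq_bigr do rewrite rmorph_sum.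
under eq_bigr do under eq_bigr do rewrite /= -ip_self ipDl ipNl !ipDr !ipNr.
under [X in _ = X *+ _ - _]eq_bigr do rewrite -ip_self.
rewrite ip_suml; under [X in _ = _ - X *+ 2]eq_bigr do rewrite ip_sumr.
under eq_bigr do rewrite !sumrB.
have sum_const_in (F : I -> R[i]) :
    \sum_(i | P i) \sum_(j | P j) F i = (\sum_(i | P i) F i) *+ #|P|.
  by rewrite -sumrMnl; apply: eq_bigr => i _; rewrite sumr_const.
rewrite !sumrB [X in _ - (X - _)]exchange_big [X in _ - (_ - X)]exchange_big /=.
rewrite !sum_const_in mulnC mulrnA !mulr2n; ring.
Qed.

Lemma hnorm_sum_le (I : finType) (P : pred I) (V : I -> Y) :
  hnorm ip (\sum_(i | P i) V i) ^+ 2 / #|P|%:R <= \sum_(i | P i) hnorm ip (V i) ^+ 2.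
Proof.
have [P0|P_gt0] := posnP #|P|.
  by rewrite P0 invr0 mulr0; apply: sumr_ge0 => i _; exact: sqr_ge0.
rewrite ler_pdivrMr ?ltr0n // mulr_natr -subr_ge0 -(pmulrn_lge0 _ (isT : (0 < 2)%N)).
rewrite mulrnBl -mulrnA mulnC -lagrange_identity.
by do 2!apply: sumr_ge0 => ? _; exact: sqr_ge0.
Qed.

Lemma hnorm_sum_eq (I : finType) (P : pred I) (V : I -> Y) :
  hnorm ip (\sum_(i | P i) V i) ^+ 2 / #|P|%:R = \sum_(i | P i) hnorm ip (V i) ^+ 2 ->
  {in P &, forall i j, V i = V j}.
Proof.
move=> eq_mean i j Pi Pj; apply/eqP; rewrite -subr_eq0; apply/eqP/hnorm_sqr_eq0.
have P_gt0 : (0 < #|P|)%N by apply/card_gt0P; exists i.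
have sq_ge0 i' j' : 0 <= hnorm ip (V i' - V j') ^+ 2 by exact: sqr_ge0.
have : \sum_(i' | P i') \sum_(j' | P j') hnorm ip (V i' - V j') ^+ 2 = 0.
  rewrite lagrange_identity mulnC mulrnA -eq_mean -[X in X *+ 2 - _]mulr_natr.
  by rewrite divfK ?subrr // pnatr_eq0 -lt0n.
move/psumr_eq0P => /(_ (fun i' _ => sumr_ge0 _ (fun j' _ => sq_ge0 i' j')) i Pi).
by move/psumr_eq0P => /(_ (fun j' _ => sq_ge0 i j') j Pj).
Qed.

End InnerProduct.

Section Fibres.
Variables d k : nat.

Definition fibre (n : {ffun 'I_d -> 'I_k.+1}) : pred (k.-tuple 'I_d) :=
  fun w => [forall j, abel w j == n j].

Lemma fibreE n w : fibre n w = has_counts (fun j => n j) w.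
Proof. by apply: eq_forallb => j; rewrite ffunE. Qed.

Definition abel_ord (w : k.-tuple 'I_d) : {ffun 'I_d -> 'I_k.+1} :=
  [ffun j => inord (count_mem j w)].

Lemma abel_ordE w j : abel_ord w j = count_mem j w :> nat.
Proof.
rewrite ffunE inordK // ltnS -[X in (_ <= X)%N](size_tuple w) -sum_count_mem.
by rewrite (bigD1 j) ?leq_addr.
Qed.

Lemma mdeg_abel_ord w : mdeg (abel_ord w) == k.
Proof.
by rewrite /mdeg (eq_bigr _ (fun j _ => abel_ordE w j)) sum_count_mem size_tuple.
Qed.

Lemma eq_abel_ord w n : (abel_ord w == n) = fibre n w.
Proof.
apply/eqP/forallP => [<- j|w_n]; first by rewrite ffunE abel_ordE.
by apply/ffunP => j; apply: val_inj; rewrite /= abel_ordE; move/eqP: (w_n j); rewrite ffunE.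
Qed.

Lemma sum_by_fibres (V : nmodType) (G : k.-tuple 'I_d -> V) :
  \sum_(w : k.-tuple 'I_d) G w =
  \sum_(n : {ffun 'I_d -> 'I_k.+1} | mdeg n == k) \sum_(w | fibre n w) G w.
Proof.
rewrite (partition_big abel_ord (fun n => mdeg n == k)) => [|w _]; last exact: mdeg_abel_ord.
by apply: eq_bigr => n _; apply: eq_bigl => w; rewrite eq_abel_ord.
Qed.

Lemma card_fibre n : mdeg n == k -> (#|fibre n| * \prod_j (n j)`!)%N = k`!.
Proof.
move=> /eqP deg_n; rewrite -(sum_has_counts deg_n) -sum1_card big_mkcond.
congr (_ * _)%N; apply: eq_bigr => w _.
by rewrite unfold_in -fibreE /fibre; case: [forall j, _].
Qed.

Lemma card_fibre_gt0 n : mdeg n == k -> (0 < #|fibre n|)%N.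
Proof. by move=> deg_n; have := fact_gt0 k; rewrite -(card_fibre deg_n) muln_gt0 => /andP[]. Qed.

Lemma arv_weightE (R : realType) n : mdeg n == k -> arv_weight R n = #|fibre n|%:R^-1.
Proof.
move=> deg_n; rewrite /arv_weight -(card_fibre deg_n) natrM invfM mulrCA divff ?mulr1 //.
by rewrite pnatr_eq0 -lt0n prodn_gt0 // => j; exact: fact_gt0.
Qed.

End Fibres.

Section Levels.
Variables (R : realType) (X Y : lmodType R[i]) (ipY : Y -> Y -> R[i]).
Hypothesis hY : is_hilbert ipY.
Variables (d : nat) (C : X -> Y) (A : 'I_d -> X -> X).

Definition out_level k x := \sum_(w : k.-tuple 'I_d) hnorm ipY (C (wact A w x)) ^+ 2.

Definition aout_level k x := \sum_(n : {ffun 'I_d -> 'I_k.+1} | mdeg n == k)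
  arv_weight R n * hnorm ipY (acoef C A n x) ^+ 2.

Lemma aout_level_fibre k (n : {ffun 'I_d -> 'I_k.+1}) x : mdeg n == k ->
  arv_weight R n * hnorm ipY (acoef C A n x) ^+ 2 =
  hnorm ipY (\sum_(w | fibre n w) C (wact A w x)) ^+ 2 / #|fibre n|%:R.
Proof. by move=> deg_n; rewrite (arv_weightE R deg_n) mulrC. Qed.

Lemma aout_level_le k x : aout_level k x <= out_level k x.
Proof.
rewrite /out_level (sum_by_fibres (fun w => hnorm ipY (C (wact A w x)) ^+ 2)).
by apply: ler_sum => n deg_n; rewrite aout_level_fibre //; exact: hnorm_sum_le.
Qed.

Lemma aout_level_eq k x : aout_level k x = out_level k x ->
  forall n : {ffun 'I_d -> 'I_k.+1}, mdeg n == k ->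
  {in fibre n &, forall w w' : k.-tuple 'I_d, C (wact A w x) = C (wact A w' x)}.
Proof.
pose gap (n : {ffun 'I_d -> 'I_k.+1}) :=
  \sum_(w | fibre n w) hnorm ipY (C (wact A w x)) ^+ 2 -
  hnorm ipY (\sum_(w | fibre n w) C (wact A w x)) ^+ 2 / #|fibre n|%:R.
have gap_ge0 n : 0 <= gap n by rewrite subr_ge0; exact: hnorm_sum_le.
move=> eq_level n deg_n; apply: (hnorm_sum_eq hY); apply/eqP; rewrite eq_sym -subr_eq0.
have : \sum_(n | mdeg n == k) gap n = 0.
  rewrite sumrB -(sum_by_fibres (fun w => hnorm ipY (C (wact A w x)) ^+ 2)).
  under [X in _ - X]eq_bigr => n' deg_n' do rewrite -aout_level_fibre //.
  by rewrite -/(out_level k x) -/(aout_level k x) eq_level subrr.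
by move/psumr_eq0P => /(_ (fun n _ => gap_ge0 n) n deg_n) /eqP.
Qed.

Lemma C_abelian_of_levels :
  (forall k x, aout_level k x = out_level k x) -> C_abelian C A.
Proof.
move=> eq_levels u v abel_uv x.
have size_vu : size v == size u.
  have /(congr1 (fun f : {ffun 'I_d -> nat} => \sum_j f j)) := abel_uv.
  rewrite /abel; under eq_bigr do rewrite ffunE; under [in RHS]eq_bigr do rewrite ffunE.
  by rewrite !sum_count_mem => ->.
pose w := in_tuple u; pose w' := Tuple size_vu.
have w_fibre : fibre (abel_ord w) w by rewrite -eq_abel_ord.
have w'_fibre : fibre (abel_ord w) w' by rewrite /fibre /= -abel_uv.
exact: (aout_level_eq (eq_levels _ x) (mdeg_abel_ord w) w_fibre w'_fibre).
Qed.

Lemma level_gram_of_C_abelian : C_abelian C A -> forall k x y,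
  \sum_(n : {ffun 'I_d -> 'I_k.+1} | mdeg n == k)
     (arv_weight R n)%:C * ipY (acoef C A n x) (acoef C A n y) =
  \sum_(w : k.-tuple 'I_d) ipY (C (wact A w x)) (C (wact A w y)).
Proof.
move=> C_ab k x y.
rewrite (sum_by_fibres (fun w => ipY (C (wact A w x)) (C (wact A w y)))).
apply: eq_bigr => n deg_n.
have row w : fibre n w ->
    ipY (C (wact A w x)) (acoef C A n y) = ipY (C (wact A w x)) (C (wact A w y)) *+ #|fibre n|.
  move=> w_n; rewrite /acoef (ip_sumr hY) -sumr_const; apply: eq_bigr => w' w'_n.
  congr ipY; apply: C_ab; apply/ffunP => j.
  by move: (forallP w_n j) (forallP w'_n j) => /eqP -> /eqP ->.
rewrite [acoef C A n x]/acoef (ip_suml hY) (eq_bigr _ row) sumrMnl -mulr_natr mulrCA.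
rewrite -(rmorph_nat (real_complex R)) -rmorphM (arv_weightE R deg_n) mulVf ?mulr1 //.
by rewrite pnatr_eq0 -lt0n card_fibre_gt0.
Qed.

End Levels.

Section PartialSums.
Variable R : realType.
Implicit Types a b : nat -> R.

Local Notation psum a := (fun N => \sum_(k < N.+1) a k).

Lemma nondecreasing_psum a : (forall k, 0 <= a k) -> nondecreasing_seq (psum a).
Proof.
by move=> a_ge0; apply/nondecreasing_seqP => N; rewrite [leRHS]big_ord_recr lerDl.
Qed.

Lemma is_cvgn_psum a M : (forall k, 0 <= a k) -> (forall N, \sum_(k < N.+1) a k <= M) ->
  cvgn (psum a).
Proof.
move=> a_ge0 a_le; apply: nondecreasing_is_cvgn; first exact: nondecreasing_psum.
by exists M => _ [N _ <-].
Qed.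

Lemma is_cvgn_psum_le a b : (forall k, 0 <= a k <= b k) -> cvgn (psum b) -> cvgn (psum a).
Proof.
move=> ab cvg_b; have b_ge0 k : 0 <= b k by case/andP: (ab k) => /le_trans; apply.
apply: (is_cvgn_psum (M := limn (psum b))) => [k|N]; first by case/andP: (ab k).
apply: le_trans (nondecreasing_cvgn_le (nondecreasing_psum b_ge0) cvg_b N).
by apply: ler_sum => k _; case/andP: (ab k).
Qed.

Lemma ler_lim_psum a b : (forall k, 0 <= a k <= b k) -> cvgn (psum b) ->
  limn (psum a) <= limn (psum b).
Proof.
move=> ab cvg_b; apply: ler_lim => //; first exact: is_cvgn_psum_le cvg_b.
by apply: nearW => N; apply: ler_sum => k _; case/andP: (ab k).
Qed.

Lemma lim_psum_eq a b : (forall k, 0 <= a k <= b k) -> cvgn (psum b) ->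
  limn (psum a) = limn (psum b) -> a =1 b.
Proof.
move=> ab cvg_b eq_lim k; apply/eqP; rewrite eq_le; case/andP: (ab k) => _ -> /=.
have gap_ge0 i : 0 <= b i - a i by rewrite subr_ge0; case/andP: (ab i).
have cvg_a := is_cvgn_psum_le ab cvg_b.
have psum_gap : psum (fun i => b i - a i) = psum b - psum a.
  by apply: funext => N; rewrite sumrB.
have cvg_gap : cvgn (psum (fun i => b i - a i)) by rewrite psum_gap; exact: is_cvgB.
have lim_gap : limn (psum (fun i => b i - a i)) = 0.
  by rewrite psum_gap limB // eq_lim subrr.
have := nondecreasing_cvgn_le (nondecreasing_psum gap_ge0) cvg_gap k.
rewrite lim_gap big_ord_recr /= => gap_le0; rewrite -subr_le0.
by apply: le_trans gap_le0; rewrite lerDr; exact: sumr_ge0.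
Qed.

End PartialSums.

Lemma clim_real (R : realType) (r : nat -> R) : clim (fun N => (r N)%:C) = (limn r)%:C.
Proof. by rewrite /clim /= lim_cst. Qed.

Section Gramians.
Variables (R : realType) (X Y : lmodType R[i]) (ipX : X -> X -> R[i]) (ipY : Y -> Y -> R[i]).
Hypothesis hY : is_hilbert ipY.
Variables (d : nat) (C : X -> Y) (A : 'I_d -> X -> X).

Lemma gramE x : gram ipY C A x x = (limn (fun N => out_part ipY C A N x))%:C.
Proof.
rewrite /gram -clim_real; congr clim; apply: funext => N.
rewrite /gram_part /out_part rmorph_sum; apply: eq_bigr => k _.
by rewrite rmorph_sum; apply: eq_bigr => w _; exact: ip_self.
Qed.

Lemma agramE x : agram ipY C A x x = (limn (fun N => aout_part ipY C A N x))%:C.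
Proof.
rewrite /agram -clim_real; congr clim; apply: funext => N.
rewrite /agram_part /aout_part rmorph_sum; apply: eq_bigr => k _.
by rewrite rmorph_sum; apply: eq_bigr => n _; rewrite (ip_self hY) [in RHS]rmorphM.
Qed.

Lemma aout_part_le N x : aout_part ipY C A N x <= out_part ipY C A N x.
Proof. by apply: ler_sum => k _; exact: aout_level_le. Qed.

Lemma agram_eq_gram_of_C_abelian :
  C_abelian C A -> forall x y, agram ipY C A x y = gram ipY C A x y.
Proof.
move=> C_ab x y; congr clim; apply: funext => N; apply: eq_bigr => k _.
exact: level_gram_of_C_abelian.
Qed.

Hypothesis hst : output_stable ipX ipY C A.

Let level_bounds x k : 0 <= aout_level ipY C A k x <= out_level ipY C A k x.
Proof.
rewrite aout_level_le // andbT; apply: sumr_ge0 => n _.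
by apply: mulr_ge0; [rewrite divr_ge0 ?ler0n | exact: sqr_ge0].
Qed.

Lemma is_cvgn_out_part x : cvgn (fun N => out_part ipY C A N x).
Proof.
have [M out_bound] := hst.
apply: (@is_cvgn_psum _ (out_level ipY C A ^~ x) (M * hnorm ipX x ^+ 2)) => [k|N];
  last exact: out_bound.
by apply: sumr_ge0 => w _; exact: sqr_ge0.
Qed.

Lemma agram_le_gram x : agram ipY C A x x <= gram ipY C A x x.
Proof.
by rewrite agramE gramE lecR; exact: (ler_lim_psum (level_bounds x) (@is_cvgn_out_part x)).
Qed.

Lemma C_abelian_of_gram_eq :
  (forall x, agram ipY C A x x = gram ipY C A x x) -> C_abelian C A.
Proof.
move=> gram_eq; apply: (C_abelian_of_levels hY) => k x.
apply: (lim_psum_eq (level_bounds x) (@is_cvgn_out_part x)).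
by apply: complexI; rewrite -agramE -gramE.
Qed.

End Gramians.

Unset Implicit Arguments.
Set Strict Implicit.

Theorem proposition3p8 (R : realType) (X Y : lmodType R[i])
  (ipX : X -> X -> R[i]) (ipY : Y -> Y -> R[i])
  (hX : is_hilbert ipX) (hY : is_hilbert ipY)
  (d : nat) (C : X -> Y) (A : 'I_d -> X -> X)
  (hC : bounded_op ipX ipY C) (hA : forall i, bounded_op ipX ipX (A i))
  (hst : output_stable ipX ipY C A) :
  (a_output_stable ipX ipY C A /\
     (forall x : X, agram ipY C A x x <= gram ipY C A x x))
  /\ ((forall x y : X, agram ipY C A x y = gram ipY C A x y) <-> C_abelian C A).
Proof.
have [M out_bound] := hst.
split; [split | split].
- by exists M => x N; exact: le_trans (aout_part_le hY C A N x) (out_bound x N).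
- exact: (agram_le_gram hY hst).
- by move=> gram_eq; apply: (C_abelian_of_gram_eq hY hst) => x; exact: gram_eq.
- exact: (agram_eq_gram_of_C_abelian hY).
Qed.
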